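(* Assume conditions (i) and (ii) of the context. There exists a polynomial $h_1:\mathbb R^3\to\mathbb R$ such that for all $d\in\mathbb N$, every architecture $a$ with input dimension $d$, every $R\in(0,\infty)$, all $K,D\in[1,\infty)$ and every $\varepsilon\in(0,1)$ with $K\ge h_1(\varepsilon^{-1},d,D)$, it holds with $\mathcal H=\mathcal N_{a,R,D}$ that $$\sup_{f\in\mathcal H}\big|\mathcal E_d^{(K)}(f)-\mathcal E_d(f)\big|\le\varepsilon.$$
   Context: Fix $T\in(0,\infty)$ and reals $u<v$. For each $d\in\mathbb N$: $\mu_d:\mathbb R^d\to\mathbb R^d$, $\sigma_d:\mathbb R^d\to\mathbb R^{d\times d}$ Lipschitz, $\varphi_d:\mathbb R^d\to\mathbb R$ measurable; on a filtered probability space, $B$ a standard $d$-dimensional Brownian motion, $X_d$ uniform on $[u,v]^d$ and $\mathcal F_0$-measurable, $S_t=X_d+\int_0^t\mu_d(S_s)ds+\int_0^t\sigma_d(S_s)dB_s$, $Y_d=S_T=(Y_{d,1},\dots,Y_{d,d})$. Risk $\mathcal E_d(f)=\mathbb E[(f(X_d)-\varphi_d(Y_d))^2]$; truncation $\varphi_d^{(K)}(x)=\mathbf 1\{\|x\|_\infty\le K\}\varphi_d(x)$ and $\mathcal E_d^{(K)}(f)=\mathbb E[(f(X_d)-\varphi_d^{(K)}(Y_d))^2]$. Conditions: (i) there is $c_1\in(0,\infty)$ with $\mathbb P(|Y_{d,i}|\ge t)\le2\exp\{-c_1(\log t)^2\}$ for all $d$, $t\ge1$, $i\le d$; (ii)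 there are $c_2\in(0,\infty)$, $\lambda\in[2,\infty)$ with $|\varphi_d(y)|\le c_2(1+\|y\|_2^\lambda)$ for all $d$, $y\in\mathbb R^d$. ReLU networks: for $L\in\mathbb N$ and architecture $a=(N_0,N_1,\dots,N_L)$ with $N_0=d$, $N_L=1$, parameters $\theta=((A_1,b_1),\dots,(A_L,b_L))$, $A_l\in\mathbb R^{N_l\times N_{l-1}}$, $b_l\in\mathbb R^{N_l}$, realize $\Phi_\theta=W_L\circ\rho\circ W_{L-1}\circ\cdots\circ\rho\circ W_1$ with $W_l(x)=A_lx+b_l$ and $\rho$ the componentwise ReLU $\max\{\cdot,0\}$; $\|\theta\|_\infty$ is the maximal absolute entry; $P(a)=\sum_{l=1}^L N_l(N_{l-1}+1)$; $\mathcal N_{a,R}=\{\Phi_\theta|_{[u,v]^d}:\|\theta\|_\infty\le R\}$; $\mathrm{Clip}_D(x)=\min\{|x|,D\}\operatorname{sgn}(x)$; $\mathcal N_{a,R,D}=\{\mathrm{Clip}_D\circ\Phi:\Phi\in\mathcal N_{a,R}\}$. *)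

From HB Require Import structures.
From mathcomp Require Import all_boot all_order all_algebra.
From mathcomp Require Import all_classical all_reals all_analysis.
Set Implicit Arguments. Unset Strict Implicit. Unset Printing Implicit Defensive.
Import Order.TTheory GRing.Theory Num.Theory Num.Def.
Local Open Scope classical_set_scope.
Local Open Scope ring_scope.

Section Defs.
Variable R : realType.

Definition norm2 n (y : n.-tuple R) : R := Num.sqrt (\sum_(i < n) (tnth y i) ^+ 2).
Definition norminf n (y : n.-tuple R) : R := \big[Num.max/0]_(i < n) `|tnth y i|.

Definition truncphi n (K : R) (phi : n.-tuple R -> R) (y : n.-tuple R) : R :=
  if norminf y <= K then phi y else 0.

Definition clip (D x : R) : R := Num.min `|x| D * sgr x.

Definition relu (x : R) : R := Num.max x 0.

(* Architecture a = (N_0, ..., N_L), L >= 1, N_0 = d, N_L = 1, widths positive *)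
Definition arch (d : nat) (a : seq nat) : Prop :=
  (2 <= size a)%N /\ head 0%N a = d /\ last 0%N a = 1%N /\ all (fun w => 0 < w)%N a.

(* Parameters theta = ((A_1,b_1),...,(A_L,b_L)): entry (i,j) of A_l is A l i j,
   entry i of b_l is b l i (indices i < N_l, j < N_{l-1}; other values unused). *)
Definition param_bound (a : seq nat) (Rb : R)
    (A : nat -> nat -> nat -> R) (b : nat -> nat -> R) : Prop :=
  forall l i j, (1 <= l <= (size a).-1)%N -> (i < nth 0 a l)%N -> (j < nth 0 a l.-1)%N ->
    `|A l i j| <= Rb /\ `|b l i| <= Rb.

(* W_L o rho o W_{L-1} o ... o rho o W_1, acting on vectors represented as nat -> R;
   l is the index of the current layer, ws the remaining widths (N_{l-1} :: N_l :: ...). *)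
Fixpoint realize_from (A : nat -> nat -> nat -> R) (b : nat -> nat -> R)
    (l : nat) (ws : seq nat) (x : nat -> R) : nat -> R :=
  match ws with
  | n0 :: ws' =>
    match ws' with
    | [::] => x
    | _ :: ws'' =>
      let y := fun i => \sum_(j < n0) A l i j * x j + b l i in
      if ws'' is [::] then y
      else realize_from A b l.+1 ws' (fun i => relu (y i))
    end
  | [::] => x
  end.

(* Phi_theta(x) in R (the output layer has width N_L = 1, its single entry is index 0) *)
Definition realization (a : seq nat) A b n (x : n.-tuple R) : R :=
  realize_from A b 1 a (fun j => nth 0 (tval x) j) 0%N.

Definition clipped_net (a : seq nat) A b (D : R) n (x : n.-tuple R) : R :=
  clip D (realization a A b x).

Definition poly3 (N : nat) (c : nat -> nat -> nat -> R) (x y z : R) : R :=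
  \sum_(i < N) \sum_(j < N) \sum_(k < N) c i j k * x ^+ i * y ^+ j * z ^+ k.

(* X is uniformly distributed on [u,v]^n: X is a random vector whose law
   agrees with the n-fold product of the uniform law on [u,v] on measurable
   rectangles (which determines the law). *)
Definition uniform_cube (u v : R) (huv : u < v) (n : nat) d (Om : measurableType d)
    (P : probability Om R) (X : Om -> n.-tuple R) : Prop :=
  measurable_fun setT X /\
  forall S : 'I_n -> set R, (forall i, measurable (S i)) ->
    P (X @^-1` [set x | forall i, S i (tnth x i)]) =
    (\prod_(i < n) uniform_prob huv (S i))%E.

Definition risk n d (Om : measurableType d) (P : probability Om R)
    (X Y : Om -> n.-tuple R) (f g : n.-tuple R -> R) : \bar R :=
  (\int[P]_w ((f (X w) - g (Y w)) ^+ 2)%:E)%E.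

End Defs.

(* Truncating phi at level K only changes the integrand on E = {|Y|_oo > K},
   where the truncated risk integrates f(X)^2 and the untruncated one
   (f(X) - phi(Y))^2; off E the two integrands agree.  So it suffices that both
   integrals over E are at most eps.  On E both integrands are bounded by
   ((D + 2 c2) n^L |Y|_oo^lam)^2 for an integer L >= lam, by the growth of phi
   and |y|_2 <= sqrt n |y|_oo.  Cut E into the shells
   {2^k K < |Y|_oo <= 2^(k+1) K}; by the union bound
   P(|Y|_oo > x) <= 2 n exp(-c1 (ln x)^2), and x^(2 lam) exp(-c1 (ln x)^2) <= 1/x
   as soon as c1 ln x >= 2 lam + 1.  Hence the k-th shell contributes at most
   eps / 2^(k+1) provided ln K >= (2 lam + 1)/c1 and
   K >= 4 (2^lam (1 + 2 c2))^2 n^(2L+1) D^2 / eps, two conditions that follow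
   from K >= h_1(1/eps, n, D). *)

From HB Require Import structures.
From mathcomp Require Import all_boot all_order all_algebra.
From mathcomp Require Import all_classical all_reals all_analysis.
From mathcomp Require Import ring lra measurable_realfun.
Import Order.TTheory GRing.Theory Num.Theory Num.Def.
Local Open Scope classical_set_scope.
Local Open Scope ring_scope.

Section norms_and_clip.
Context {R : realType}.

Lemma norminf_ge0 {n} (y : n.-tuple R) : 0 <= norminf y.
Proof. exact: bigmax_ge_id. Qed.

Lemma le_norminf {n} (y : n.-tuple R) i : `|tnth y i| <= norminf y.
Proof. exact: le_bigmax. Qed.

Lemma norminf_gt {n} (y : n.-tuple R) x : 0 <= x -> x < norminf y ->
  exists i, x < `|tnth y i|.
Proof.
move=> x0 xy; apply/existsP; apply: contraTT xy; rewrite negb_exists -leNgt.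
by move=> /forallP yx; apply/bigmax_leP; split=> // i _; rewrite leNgt yx.
Qed.

Lemma norm2_le_norminf {n} (y : n.-tuple R) : norm2 y <= Num.sqrt n%:R * norminf y.
Proof.
have M0 := norminf_ge0 y.
rewrite -[norminf y]ger0_norm // -sqrtr_sqr -sqrtrM ?ler0n //.
rewrite ler_sqrt ?mulr_ge0 ?ler0n ?sqr_ge0 //.
rewrite (_ : _ * _ = \sum_(i < n) norminf y ^+ 2); last first.
  by rewrite sumr_const card_ord mulr_natl.
apply: ler_sum => i _; rewrite -real_normK ?num_real //.
by rewrite ler_sqr ?nnegrE ?normr_ge0 ?le_norminf.
Qed.

Lemma clipE (D x : R) : 0 <= D -> clip D x = Num.max (- D) (Num.min x D).
Proof.
move=> D0; rewrite /clip; case: (ltrgt0P x) => [x0|x0|->].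
- by rewrite gtr0_sg // mulr1 (max_idPr _) // le_min; lra.
- rewrite ltr0_sg // mulrN1 oppr_min opprK maxC (min_idPl _) //; lra.
- by rewrite sgr0 mulr0 (min_idPl D0) (max_idPr _) //; lra.
Qed.

Lemma norm_clip_le (D x : R) : 0 <= D -> `|clip D x| <= D.
Proof.
move=> D0; rewrite clipE // ler_norml le_max lexx /= ge_max ge_min lexx orbT.
by rewrite andbT; lra.
Qed.

End norms_and_clip.

Section measurability.
Context {d} {T : measurableType d} {R : realType}.

Lemma measurable_lt_fun (f : T -> R) x : measurable_fun setT f ->
  measurable [set w | x < f w].
Proof.
move=> mf; rewrite -[X in measurable X]setTI.
exact: (measurable_fun_ltr (measurable_cst x) mf measurableT).
Qed.

Lemma measurable_le_fun (f : T -> R) x : measurable_fun setT f ->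
  measurable [set w | x <= f w].
Proof.
move=> mf; rewrite -[X in measurable X]setTI.
exact: (measurable_fun_ler (measurable_cst x) mf measurableT).
Qed.

Lemma measurable_bigmaxr (I : Type) (r : seq I) (p : pred I) (F : I -> T -> R) :
  (forall i, measurable_fun setT (F i)) ->
  measurable_fun setT (fun w => \big[Num.max/0]_(i <- r | p i) F i w).
Proof.
move=> mF; elim: r => [|i r IH].
  by under eq_fun do rewrite big_nil; exact: measurable_cst.
under eq_fun do rewrite big_cons.
by case: (p i) => //; exact: measurable_maxr.
Qed.

Lemma measurable_norminf n (Y : T -> n.-tuple R) : measurable_fun setT Y ->
  measurable_fun setT (fun w => norminf (Y w)).
Proof.
move=> mY; apply: measurable_bigmaxr => i.
exact: measurableT_comp (measurableT_comp (measurable_tnth i) mY).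
Qed.

Lemma measurable_nth_tuple n (X : T -> n.-tuple R) j : measurable_fun setT X ->
  measurable_fun setT (fun w => nth 0 (tval (X w)) j).
Proof.
move=> mX; case: (ltnP j n) => [jn|nj].
  under eq_fun do rewrite -(tnth_nth 0 (X _) (Ordinal jn)).
  exact: measurableT_comp (measurable_tnth _) mX.
by under eq_fun do rewrite nth_default ?size_tuple //; exact: measurable_cst.
Qed.

Lemma measurable_realize_from A b ws : forall l (x : nat -> T -> R),
  (forall j, measurable_fun setT (x j)) ->
  forall i, measurable_fun setT (fun w => realize_from A b l ws (x^~ w) i).
Proof.
elim: ws => [|n0 [|n1 ws] IH] l x mx i //=.
have my k : measurable_fun setT (fun w => \sum_(j < n0) A l k j * x j w + b l k).
  apply: measurable_funD => //; apply: measurable_sum => j.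
  exact: measurable_funM.
case: ws IH => [|n2 ws] IH //.
apply: (IH l.+1 (fun k w => relu (\sum_(j < n0) A l k j * x j w + b l k))) => k.
exact: measurable_maxr.
Qed.

Lemma norminf_tail_le (mu : {measure set T -> \bar R}) n (Y : T -> n.-tuple R)
    (x : R) (e : \bar R) :
  measurable_fun setT Y -> 0 <= x ->
  (forall i, mu [set w | (x <= `|tnth (Y w) i|)%R] <= e)%E ->
  (mu [set w | (x < norminf (Y w))%R] <= n%:R%:E * e)%E.
Proof.
move=> mY x0 tail.
pose F k := [set w | x <= `|nth 0 (tval (Y w)) k|].
have mF k : measurable (F k).
  by apply: measurable_le_fun; apply: measurableT_comp => //; exact: measurable_nth_tuple.
have cover : [set w | x < norminf (Y w)] `<=` \big[setU/set0]_(k < n) F k.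
  move=> w /norminf_gt-/(_ x0)[i xi]; rewrite -bigcup_mkord.
  by exists i; [exact: ltn_ord | rewrite /F /= -tnth_nth ltW].
apply: le_trans (content_subadditive mu (fun k _ => mF k) _ cover) _.
  exact/measurable_lt_fun/measurable_norminf.
have -> : (n%:R%:E * e = \sum_(k < n) e)%E by rewrite sumr_const card_ord mule_natl.
by apply: lee_sum => i _; rewrite /F; under eq_set do rewrite -tnth_nth; exact: tail.
Qed.

End measurability.

Lemma measurable_clipped_net {R : realType} a A b (D : R) n : 0 <= D ->
  measurable_fun setT (@clipped_net R a A b D n).
Proof.
move=> D0; rewrite /clipped_net; under eq_fun do rewrite clipE //.
apply: measurable_maxr => //; apply: measurable_minr => //.
apply: measurable_realize_from => j.
by apply: (measurable_nth_tuple n id j).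
Qed.

Section real_facts.
Context {R : realType}.

Lemma sqr_le_of_norm_le (x C : R) : `|x| <= C -> x ^+ 2 <= C ^+ 2.
Proof. by move=> xC; rewrite -real_normK ?num_real // ler_sqr ?nnegrE ?(le_trans _ xC). Qed.

Lemma poly3_ge_monomial N (c : nat -> nat -> nat -> R) (x y z : R) i j k :
  (i < N)%N -> (j < N)%N -> (k < N)%N ->
  (forall i j k, 0 <= c i j k) -> 0 <= x -> 0 <= y -> 0 <= z ->
  c i j k * x ^+ i * y ^+ j * z ^+ k <= poly3 N c x y z.
Proof.
move=> iN jN kN c0 x0 y0 z0.
have t0 i' j' k' : 0 <= c i' j' k' * x ^+ i' * y ^+ j' * z ^+ k'.
  by rewrite !mulr_ge0 // exprn_ge0.
rewrite /poly3 (bigD1 (Ordinal iN)) //= (bigD1 (Ordinal jN)) //=.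
rewrite (bigD1 (Ordinal kN)) //= -!addrA lerDl.
by do ![apply: addr_ge0 | apply: sumr_ge0 => ? _ | exact: t0].
Qed.

Lemma dyadic_bracket (K x : R) : 0 < K -> K < x ->
  exists k : nat, 2 ^+ k * K < x /\ x <= 2 ^+ k.+1 * K.
Proof.
move=> K0 Kx.
have [m xm] : exists m : nat, x <= 2 ^+ m * K.
  exists (Num.bound (x / K)); rewrite -ler_pdivrMr //.
  apply: le_trans (ltW (archi_boundP _)) _; first by rewrite divr_ge0 //; lra.
  by rewrite -natrX ler_nat ltnW // ltn_expl.
elim: m xm => [|m IH] xm; first by rewrite expr0 mul1r in xm; lra.
by case: (lerP x (2 ^+ m * K)) => [/IH|]; last exists m.
Qed.

Lemma powR_sqr_expR_lnsqr_le (c lam x : R) : 1 <= x -> 2 * lam + 1 <= c * ln x ->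
  (x `^ lam) ^+ 2 * expR (- (c * ln x ^+ 2)) <= x^-1.
Proof.
move=> x1 clx; have x0 : 0 < x by lra.
have lx0 : 0 <= ln x by exact: ln_ge0.
rewrite /powR gt_eqF // -expRM_natr -expRD -[in leRHS](lnK (x0 : x \in Num.pos)).
by rewrite -expRN ler_expR; nra.
Qed.

Lemma sqrt_powR_le_expn (x lam : R) (L : nat) : 1 <= x -> 0 <= lam -> lam <= L%:R ->
  Num.sqrt x `^ lam <= x ^+ L.
Proof.
move=> x1 lam0 lamL; rewrite -powR_mulrn; last lra.
apply: le_trans (ler_powR x1 lamL); apply: ge0_ler_powR; rewrite ?nnegrE ?sqrtr_ge0 //; first lra.
have := sqr_sqrtr (ltW (lt_le_trans ltr01 x1)); have := sqrtr_ge0 x; nra.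
Qed.

Lemma growth_bound_le (a b D c Q : R) : 0 <= D -> 0 <= c -> 1 <= Q ->
  `|a| <= D -> `|b| <= c * (1 + Q) ->
  `|a| <= (D + 2 * c) * Q /\ `|a - b| <= (D + 2 * c) * Q.
Proof. by move=> D0 c0 Q1 aD bQ; have := ler_normB a b; split; nra. Qed.

End real_facts.

Section dyadic_shells.
Context {d} {T : measurableType d} {R : realType} (mu : {measure set T -> \bar R}).
Local Open Scope ereal_scope.

(* f is dominated on {K < M} by G = sum_k h(2^(k+1) K) 1{2^k K < M}: on the
   shell {2^k K < M <= 2^(k+1) K} the k-th term alone exceeds h(M). *)
Lemma integral_dyadic_shells_le (M : T -> R) (K : R) (h : R -> R) (f : T -> \bar R) :
  measurable_fun setT M -> (0 < K)%R ->
  (forall x, K <= x -> 0 <= h x)%R ->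
  (forall x y, K <= x -> x <= y -> h x <= h y)%R ->
  measurable_fun [set w | (K < M w)%R] f ->
  (forall w, (K < M w)%R -> 0 <= f w <= (h (M w))%:E) ->
  \int[mu]_(w in [set w | (K < M w)%R]) f w <=
    \sum_(k <oo) (h (2 ^+ k.+1 * K))%:E * mu [set w | (2 ^+ k * K < M w)%R].
Proof.
move=> mM K0 h0 hmono mf fh.
set E := [set w | (K < M w)%R].
pose S k := [set w | (2 ^+ k * K < M w)%R].
pose r k := h (2 ^+ k.+1 * K)%R.
have Kk k : (K <= 2 ^+ k * K)%R by rewrite ler_peMl ?(ltW K0) // exprn_ege1 // ler1n.
have r0 k : (0 <= r k)%R by apply: h0; exact: Kk.
have mS k : measurable (S k) by exact: measurable_lt_fun.
pose G w := \sum_(k <oo) (r k * \1_(S k) w)%:E.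
have G0 k w : 0 <= (r k * \1_(S k) w)%:E by rewrite lee_fin mulr_ge0.
have mG k : measurable_fun setT (fun w => (r k * \1_(S k) w)%:E).
  by apply/measurable_EFinP/measurable_funM => //; exact/measurable_indicP.
have mE : measurable E by exact: measurable_lt_fun.
apply: (@le_trans _ _ (\int[mu]_(w in E) G w)).
  apply: ge0_le_integral => //.
  - by move=> w /fh /andP[].
  - apply: (measurable_funS measurableT) => //.
    by apply: (ge0_emeasurable_sum (P := xpredT)) => // k _; exact: mG.
  move=> w Ew; have [k [kw wk]] := dyadic_bracket _ _ K0 Ew.
  apply: le_trans (_ : (r k)%:E <= G w).
    by have /andP[_ /le_trans->] := fh w Ew; rewrite // lee_fin hmono // ltW.
  apply: le_trans (nneseries_lim_ge k.+1 (fun i _ _ => G0 i w)).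
  rewrite big_nat_recr //= indicE mem_set // mulr1 lee_paddl //.
  by rewrite sume_ge0.
rewrite integral_nneseries //; last by move=> k; exact: measurable_funS (mG k).
apply: lee_nneseries => [k _ _|k _]; first exact: integral_ge0.
under eq_integral do rewrite EFinM.
rewrite ge0_integralZl_EFin //; last by apply/measurable_EFinP; exact: measurable_indic.
by rewrite integral_indic // lee_wpmul2l ?lee_fin // measureIl.
Qed.

End dyadic_shells.

Section truncation.
Context {d} {T : measurableType d} {R : realType}
  (P : {finite_measure set T -> \bar R}).
Local Open Scope ereal_scope.

Lemma abse_subDr_le (a b c : \bar R) (e : R) : c \is a fin_num ->
  0 <= a <= e%:E -> 0 <= b <= e%:E -> `|(a + c) - (b + c)| <= e%:E.
Proof.
move=> cfin /andP[a0 ae] /andP[b0 be].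
have afin : a \is a fin_num by rewrite ge0_fin_numE // (le_lt_trans ae) ?ltry.
have bfin : b \is a fin_num by rewrite ge0_fin_numE // (le_lt_trans be) ?ltry.
move: a0 ae b0 be; rewrite -(fineK afin) -(fineK bfin) -(fineK cfin) !lee_fin.
by move=> *; rewrite ler_norml; apply/andP; split; lra.
Qed.

Lemma integral_sqr_fin_num (D : set T) (F : T -> R) (C : R) :
  measurable D -> measurable_fun D F -> (forall w, D w -> `|F w| <= C)%R ->
  \int[P]_(w in D) ((F w) ^+ 2)%:E \is a fin_num.
Proof.
move=> mD mF FC; rewrite ge0_fin_numE ?integral_ge0 // => [|w _]; last first.
  by rewrite lee_fin sqr_ge0.
apply: (@le_lt_trans _ _ (\int[P]_(w in D) (cst (C ^+ 2)%:E) w)).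
  apply: ge0_le_integral => // [w _||w /FC /sqr_le_of_norm_le]; rewrite ?lee_fin ?sqr_ge0 //.
  by apply/measurable_EFinP; exact: measurable_funX.
rewrite integral_cst // lte_mul_pinfty ?lee_fin ?sqr_ge0 //.
by rewrite ltey_eq fin_num_measure.
Qed.

Lemma integral_truncation_diff_le (f g M : T -> R) (K C e : R) :
  measurable_fun setT f -> measurable_fun setT g -> measurable_fun setT M ->
  (forall w, M w <= K -> `|f w - g w| <= C)%R ->
  \int[P]_(w in [set w | (K < M w)%R]) ((f w) ^+ 2)%:E <= e%:E ->
  \int[P]_(w in [set w | (K < M w)%R]) ((f w - g w) ^+ 2)%:E <= e%:E ->
  `| \int[P]_w ((f w - (if M w <= K then g w else 0)) ^+ 2)%:E
     - \int[P]_w ((f w - g w) ^+ 2)%:E | <= e%:E.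
Proof.
move=> mf mg mM fgC fe fge.
set E := [set w | (K < M w)%R].
have mE : measurable E by exact: measurable_lt_fun.
have mEc : measurable (~` E) by exact: measurableC.
have splitE (F : T -> R) : measurable_fun setT F ->
    \int[P]_w ((F w) ^+ 2)%:E =
    \int[P]_(w in E) ((F w) ^+ 2)%:E + \int[P]_(w in ~` E) ((F w) ^+ 2)%:E.
  move=> mF; rewrite -integral_setU ?setUv //; last exact/disj_setPCl.
  by apply/measurable_EFinP; exact: measurable_funX.
have mtrunc : measurable_fun setT (fun w => if M w <= K then g w else 0)%R.
  exact: measurable_fun_ifT (measurable_fun_ler mM (measurable_cst K)) mg _.
rewrite (splitE _ (measurable_funB mf mtrunc)) (splitE _ (measurable_funB mf mg)).
have onE : \int[P]_(w in E) ((f w - (if M w <= K then g w else 0)) ^+ 2)%:E =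
    \int[P]_(w in E) ((f w) ^+ 2)%:E.
  by apply: eq_integral => w /[!inE] /= Kw; rewrite leNgt Kw subr0.
have offE : \int[P]_(w in ~` E) ((f w - (if M w <= K then g w else 0)) ^+ 2)%:E =
    \int[P]_(w in ~` E) ((f w - g w) ^+ 2)%:E.
  by apply: eq_integral => w /[!inE] /negP; rewrite -leNgt => ->.
have sq0 (F : T -> R) w : 0 <= ((F w) ^+ 2)%:E by rewrite lee_fin sqr_ge0.
rewrite onE offE abse_subDr_le ?integral_ge0 ?fe ?fge //.
apply: (integral_sqr_fin_num _ _ C mEc).
  by apply: (measurable_funS measurableT) => //; exact: measurable_funB.
by move=> w /negP; rewrite -leNgt => /fgC.
Qed.

End truncation.

Section fixed_dimension.
Context {d} {T : measurableType d} {R : realType} (P : probability T R).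
Variables (n L : nat) (X Y : T -> n.-tuple R) (phi : n.-tuple R -> R) (c1 c2 lam : R).
Hypotheses (n_gt0 : (0 < n)%N) (c1_gt0 : 0 < c1) (c2_ge0 : 0 <= c2)
  (lam_ge0 : 0 <= lam) (lam_le_L : lam <= L%:R).
Hypotheses (mX : measurable_fun setT X) (mY : measurable_fun setT Y)
  (mphi : measurable_fun setT phi).
Hypothesis Y_tail : forall (t : R) (i : 'I_n), 1 <= t ->
  (P [set w | (t <= `|tnth (Y w) i|)%R] <= (2 * expR (- (c1 * (ln t) ^+ 2)))%:E)%E.
Hypothesis phi_growth : forall y, `|phi y| <= c2 * (1 + norm2 y `^ lam).

Lemma phi_growth_norminf y : `|phi y| <= c2 * (1 + n%:R ^+ L * norminf y `^ lam).
Proof.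
apply: le_trans (phi_growth y) _; rewrite ler_wpM2l // lerD2l.
have M0 := norminf_ge0 y.
apply: le_trans (_ : _ <= (Num.sqrt n%:R * norminf y) `^ lam) _.
  by apply: ge0_ler_powR; rewrite ?nnegrE ?mulr_ge0 ?sqrtr_ge0 ?norm2_le_norminf.
rewrite powRM ?sqrtr_ge0 // ler_wpM2r ?powR_ge0 //.
by apply: sqrt_powR_le_expn; rewrite ?ler1n.
Qed.

Lemma norminf_Y_tail x : 1 <= x ->
  (P [set w | (x < norminf (Y w))%R] <= (n%:R * (2 * expR (- (c1 * ln x ^+ 2))))%:E)%E.
Proof.
move=> x1; rewrite EFinM; apply: norminf_tail_le => //; first lra.
by move=> i; exact: Y_tail.
Qed.

Lemma shell_term_le (B K e : R) k : 1 <= K -> (2 * lam + 1) / c1 <= ln K ->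
  4 * (B * 2 `^ lam) ^+ 2 * n%:R ^+ (2 * L + 1) <= e * K ->
  (B * n%:R ^+ L * (2 ^+ k.+1 * K) `^ lam) ^+ 2 *
    (n%:R * (2 * expR (- (c1 * ln (2 ^+ k * K) ^+ 2)))) <= e / (2 ^ k.+1)%:R.
Proof.
move=> K1 lnK BeK; set x := 2 ^+ k * K; set C := (B * 2 `^ lam) ^+ 2 * n%:R ^+ (2 * L + 1).
have p1 : 1 <= 2 ^+ k :> R by rewrite exprn_ege1 // ler1n.
have x1 : 1 <= x by rewrite /x; nra.
have lnx : 2 * lam + 1 <= c1 * ln x.
  rewrite [c1 * _]mulrC -ler_pdivrMr //; apply: le_trans lnK _.
  by rewrite ler_ln ?posrE /x; nra.
have C0 : 0 <= C by rewrite mulr_ge0 ?sqr_ge0 ?exprn_ge0.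
have -> : 2 ^+ k.+1 * K = 2 * x by rewrite exprS mulrA.
rewrite powRM //; last lra.
have -> : (B * n%:R ^+ L * (2 `^ lam * x `^ lam)) ^+ 2 *
    (n%:R * (2 * expR (- (c1 * ln x ^+ 2)))) =
    2 * C * ((x `^ lam) ^+ 2 * expR (- (c1 * ln x ^+ 2))).
  by rewrite /C mulnC exprD exprM expr1; ring.
apply: le_trans (ler_wpM2l _ (powR_sqr_expR_lnsqr_le _ _ _ x1 lnx)) _; first nra.
have -> : 2 * C * x^-1 = (4 * C / K) / (2 ^ k.+1)%:R.
  by rewrite natrX exprS /x; field; rewrite !gt_eqF ?exprn_gt0 //; lra.
by rewrite ler_wpM2r ?invr_ge0 ?ler0n // ler_pdivrMr ?(lt_le_trans ltr01 K1) // /C mulrA.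
Qed.

Lemma integral_tail_sqr_le (F : T -> R) (B K e : R) :
  measurable_fun setT F -> 0 <= B -> 1 <= K -> 0 < e ->
  (2 * lam + 1) / c1 <= ln K ->
  4 * (B * 2 `^ lam) ^+ 2 * n%:R ^+ (2 * L + 1) <= e * K ->
  (forall w, K < norminf (Y w) -> `|F w| <= B * n%:R ^+ L * norminf (Y w) `^ lam) ->
  (\int[P]_(w in [set w | (K < norminf (Y w))%R]) ((F w) ^+ 2)%:E <= e%:E)%E.
Proof.
move=> mF B0 K1 e0 lnK BeK FB; have K0 : 0 < K by lra.
pose h m := (B * n%:R ^+ L * m `^ lam) ^+ 2.
apply: le_trans (integral_dyadic_shells_le P (fun w => norminf (Y w)) K h _
  (measurable_norminf _ _ mY) K0 _ _ _ _) _.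
- by move=> x _; exact: sqr_ge0.
- move=> x y Kx xy; rewrite ler_sqr ?nnegrE ?mulr_ge0 ?exprn_ge0 ?powR_ge0 //.
  by rewrite ler_wpM2l ?mulr_ge0 ?exprn_ge0 // ge0_ler_powR ?nnegrE //; lra.
- by apply: (measurable_funS measurableT) => //; exact/measurable_EFinP/measurable_funX.
- by move=> w /FB/sqr_le_of_norm_le; rewrite !lee_fin sqr_ge0.
apply: le_trans (epsilon_trick0 xpredT (ltW e0)).
apply: lee_nneseries => [k _ _|k _]; first by rewrite mule_ge0 ?lee_fin ?sqr_ge0.
apply: le_trans (lee_wpmul2l _ (norminf_Y_tail _ _)) _; rewrite ?lee_fin ?sqr_ge0 //.
  by rewrite mulr_ege1 // exprn_ege1 // ler1n.
exact: shell_term_le.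
Qed.

Lemma risk_truncation_le (f : n.-tuple R -> R) (D K e : R) :
  measurable_fun setT f -> 0 <= D -> (forall x, `|f x| <= D) -> 1 <= K -> 0 < e ->
  (2 * lam + 1) / c1 <= ln K ->
  4 * ((D + 2 * c2) * 2 `^ lam) ^+ 2 * n%:R ^+ (2 * L + 1) <= e * K ->
  (`| risk P X Y f (truncphi K phi) - risk P X Y f phi | <= e%:E)%E.
Proof.
move=> mf D0 fD K1 e0 lnK BeK.
have B0 : 0 <= D + 2 * c2 by have := c2_ge0; lra.
have dom w : K < norminf (Y w) ->
    `|f (X w)| <= (D + 2 * c2) * n%:R ^+ L * norminf (Y w) `^ lam /\
    `|f (X w) - phi (Y w)| <= (D + 2 * c2) * n%:R ^+ L * norminf (Y w) `^ lam.
  move=> KM; rewrite -mulrA; apply: growth_bound_le => //; last first.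
    exact: phi_growth_norminf.
  by rewrite mulr_ege1 ?exprn_ege1 ?ler1n // -(powRr0 (norminf (Y w))) ler_powR //; lra.
have mfX : measurable_fun setT (fun w => f (X w)) by exact: measurableT_comp.
have mgY : measurable_fun setT (fun w => phi (Y w)) by exact: measurableT_comp.
rewrite /risk /truncphi.
apply: (integral_truncation_diff_le _ _ _ _ _ (D + c2 * (1 + n%:R ^+ L * K `^ lam))) => //.
- exact: measurable_norminf.
- move=> w MK; apply: le_trans (ler_normB _ _) _; rewrite lerD //.
  apply: le_trans (phi_growth_norminf _) _; rewrite ler_wpM2l // lerD2l ler_wpM2l ?exprn_ge0 //.
  by rewrite ge0_ler_powR ?nnegrE ?norminf_ge0 //; lra.
- by apply: (integral_tail_sqr_le _ (D + 2 * c2)) => // w /dom[].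
- apply: (integral_tail_sqr_le _ (D + 2 * c2)) => //; last by move=> w /dom[].
  exact: measurable_funB.
Qed.

End fixed_dimension.

Section threshold.
Context {R : realType}.

(* Coefficients of the polynomial h_1(x, y, z) = K0 + C x y^(2L+1) z^2. *)
Definition threshold_coef (K0 C : R) (L i j k : nat) : R :=
  if (i, j, k) == (0, 0, 0)%N then K0
  else if (i, j, k) == (1, 2 * L + 1, 2)%N then C else 0.

Lemma threshold_poly_ge (K0 C x y z : R) L : 0 <= K0 -> 0 <= C ->
  0 <= x -> 0 <= y -> 0 <= z ->
  K0 <= poly3 (2 * L + 3) (threshold_coef K0 C L) x y z /\
  C * x * y ^+ (2 * L + 1) * z ^+ 2 <= poly3 (2 * L + 3) (threshold_coef K0 C L) x y z.
Proof.
move=> K00 C0 x0 y0 z0.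
have c0 i j k : 0 <= threshold_coef K0 C L i j k.
  by rewrite /threshold_coef; case: ifP => // _; case: ifP.
split.
  have := poly3_ge_monomial _ _ _ _ _ 0 0 0 _ _ _ c0 x0 y0 z0.
  by rewrite /threshold_coef eqxx !expr0 !mulr1; apply; rewrite addn3.
have := poly3_ge_monomial _ _ _ _ _ 1 (2 * L + 1) 2 _ _ _ c0 x0 y0 z0.
rewrite /threshold_coef /= eqxx expr1; apply; rewrite ?addn3 //.
by rewrite addn1 ltnS leqnSn.
Qed.

Lemma threshold_monomial_le (c s D e p K : R) :
  0 <= c -> 0 <= s -> 1 <= D -> 0 < e -> 0 <= p ->
  4 * ((1 + 2 * c) * s) ^+ 2 * e^-1 * p * D ^+ 2 <= K ->
  4 * ((D + 2 * c) * s) ^+ 2 * p <= e * K.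
Proof.
move=> c0 s0 D1 e0 p0 hK; apply: le_trans (ler_wpM2l (ltW e0) hK).
have -> : e * (4 * ((1 + 2 * c) * s) ^+ 2 * e^-1 * p * D ^+ 2) =
    4 * ((1 + 2 * c) * D * s) ^+ 2 * p by field; rewrite gt_eqF.
rewrite ler_wpM2r // ler_wpM2l //.
have cs0 := mulr_ge0 c0 s0.
by apply: sqr_le_of_norm_le; rewrite ger0_norm; nra.
Qed.

End threshold.

Theorem proposition3p6 (R : realType) (u v : R) (huv : u < v)
  (dOm : nat -> measure_display) (Om : forall n : nat, measurableType (dOm n))
  (P : forall n : nat, probability (Om n) R)
  (X Y : forall n : nat, Om n -> n.-tuple R)
  (phi : forall n : nat, n.-tuple R -> R)
  (c1 c2 lam : R) :
  (forall n, uniform_cube huv (P n) (X n)) ->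
  (forall n, measurable_fun setT (Y n)) ->
  (forall n, measurable_fun setT (phi n)) ->
  (* condition (i) *)
  0 < c1 ->
  (forall (n : nat) (t : R) (i : 'I_n), 1 <= t ->
     (P n [set w | (t <= `|tnth (Y n w) i|)%R] <= (2 * expR (- (c1 * (ln t) ^+ 2)))%R%:E)%E) ->
  (* condition (ii) *)
  0 < c2 -> 2 <= lam ->
  (forall (n : nat) (y : n.-tuple R), `|phi n y| <= c2 * (1 + norm2 y `^ lam)) ->
  exists (N : nat) (c : nat -> nat -> nat -> R),
    forall (n : nat), (1 <= n)%N ->
    forall (a : seq nat), arch n a ->
    forall (Rb : R), 0 < Rb ->
    forall (K D : R), 1 <= K -> 1 <= D ->
    forall (eps : R), 0 < eps < 1 ->
    poly3 N c eps^-1 n%:R D <= K ->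
    forall (A : nat -> nat -> nat -> R) (b : nat -> nat -> R), param_bound a Rb A b ->
      (`| risk (P n) (X n) (Y n) (@clipped_net R a A b D n) (truncphi K (phi n))
          - risk (P n) (X n) (Y n) (@clipped_net R a A b D n) (phi n) | <= eps%:E)%E.
Proof.
move=> unifX mY mphi c1_gt0 Y_tail c2_gt0 lam_ge2 phi_growth.
have lam_ge0 : 0 <= lam by lra.
pose L := Num.bound lam; have lam_le_L : lam <= L%:R by exact/ltW/archi_boundP.
pose K0 := expR ((2 * lam + 1) / c1); pose C := 4 * ((1 + 2 * c2) * 2 `^ lam) ^+ 2.
exists (2 * L + 3)%N, (threshold_coef K0 C L).
(* The network only enters through measurability and |Clip_D o Phi| <= D. *)
move=> n n1 a _ Rb _ K D K1 D1 e /andP[e0 _] hK A b _.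
have D0 : 0 <= D by lra.
have einv_ge0 : 0 <= e^-1 by rewrite invr_ge0 ltW.
have [K0K CK] := threshold_poly_ge K0 C _ _ _ L (expR_ge0 _)
  (mulr_ge0 (ler0n _ 4) (sqr_ge0 _)) einv_ge0 (ler0n _ n) D0.
apply: (risk_truncation_le (P n) n L (X n) (Y n) (phi n) c1 c2 lam n1 c1_gt0 _ lam_ge0
  lam_le_L _ (mY n) (mphi n) (Y_tail n) (phi_growth n) _ D K e) => //.
- exact: ltW.
- by case: (unifX n).
- exact: measurable_clipped_net.
- by move=> x; exact: norm_clip_le.
- by rewrite -[leLHS]expRK ler_ln ?posrE ?expR_gt0 //; [exact: le_trans K0K hK | lra].
- apply: threshold_monomial_le; rewrite ?powR_ge0 ?exprn_ge0 //; first lra.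
  exact: le_trans CK hK.
Qed.
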